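(* Let $0\le p\le1$ and let $\hat\rho=|\psi\rangle\langle\psi|$ with $|\psi\rangle$ any of $|\Phi^\pm\rangle=\sqrt p|0,0\rangle\pm\sqrt{1-p}|1,1\rangle$ or $|\Psi^\pm\rangle=\sqrt p|0,1\rangle\pm\sqrt{1-p}|1,0\rangle$ (Fock states of modes $A,B$). Then $Q(\hat\rho)=\frac{4}{\pi}\sqrt{p(1-p)}$, which equals $\frac{4}{\pi}$ times the negativity $\sqrt{p(1-p)}$ of $\hat\rho$; moreover the sign-binned quadrature correlation at $\theta=\varphi=0$, $E^{0,0}=\int\!\!\int f_{0,0}(u,v)\,\mathrm{sgn}(uv)\,du\,dv$, satisfies $|E^{0,0}|=\frac{4}{\pi}\sqrt{p(1-p)}$.
   Context: $|n\rangle$ are photon-number (Fock) states of a mode with quadratures $\hat x=(\hat a+\hat a^\dagger)/\sqrt2$, $\hat p=i(\hat a^\dagger-\hat a)/\sqrt2$. For angles $\theta,\varphi$, $\hat x_A^\theta=\cos\theta\,\hat x_A+\sin\theta\,\hat p_A$, $\hat x_B^\varphi=\cos\varphi\,\hat x_B+\sin\varphi\,\hat p_B$, and $f_{\theta,\varphi}(u,v)$ is the joint density of their outcomes on $\hat\rho$. For $u,v\ge0$, $S=f(u,v)+f(-u,-v)+f(u,-v)+f(-u,v)$, $D=f(u,v)+f(-u,-v)-f(u,-v)-f(-u,v)$, $\mathcal B_{\theta,\varphi}=|D|/S$ (0 where $S=0$), and $Q(\hat\rho)=\sup_{\theta,\varphi}\int\!\!\int f_{\theta,\varphi}(u,v)\mathcal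 B_{\theta,\varphi}(|u|,|v|)\,du\,dv$. *)

From Stdlib Require Import Reals Lra Arith.
Open Scope R_scope.

Fixpoint fsum (n : nat) (f : nat -> R) : R :=
  match n with O => 0 | S k => fsum k f + f k end.

(** Physicists' Hermite polynomials, computed as the pair (H_n, H_{n+1}). *)
Fixpoint herm_pair (n : nat) (x : R) : R * R :=
  match n with
  | O => (1, 2 * x)
  | S k => let (a, b) := herm_pair k x in (b, 2 * x * b - 2 * INR (S k) * a)
  end.
Definition hermite (n : nat) (x : R) : R := fst (herm_pair n x).

(** Fock-state wavefunction <x|n> in the x-quadrature representation,
    with x = (a + a^dagger)/sqrt 2. *)
Definition fock_wf (n : nat) (x : R) : R :=
  hermite n x * exp (- x ^ 2 / 2) / sqrt (2 ^ n * INR (fact n) * sqrt PI).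

(** A two-mode pure state with real Fock coefficients c m n (m, n < N):
    |psi> = sum_{m,n<N} c m n |m,n>.  Since x^theta = e^{i theta n} x e^{-i theta n},
    <u|_theta <v|_phi |m,n> = e^{-i(m theta + n phi)} psi_m(u) psi_n(v). *)
Definition ampRe (N : nat) (c : nat -> nat -> R) (th ph u v : R) : R :=
  fsum N (fun m => fsum N (fun n =>
    c m n * cos (INR m * th + INR n * ph) * fock_wf m u * fock_wf n v)).
Definition ampIm (N : nat) (c : nat -> nat -> R) (th ph u v : R) : R :=
  - fsum N (fun m => fsum N (fun n =>
    c m n * sin (INR m * th + INR n * ph) * fock_wf m u * fock_wf n v)).

Definition dens (N : nat) (c : nat -> nat -> R) (th ph u v : R) : R :=
  ampRe N c th ph u v ^ 2 + ampIm N c th ph u v ^ 2.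

Definition Ssum N c th ph u v : R :=
  dens N c th ph u v + dens N c th ph (-u) (-v)
  + dens N c th ph u (-v) + dens N c th ph (-u) v.
Definition Ddiff N c th ph u v : R :=
  dens N c th ph u v + dens N c th ph (-u) (-v)
  - dens N c th ph u (-v) - dens N c th ph (-u) v.
Definition Bfun N c th ph u v : R :=
  if Req_dec_T (Ssum N c th ph u v) 0 then 0
  else Rabs (Ddiff N c th ph u v) / Ssum N c th ph u v.

Definition Qintegrand N c th ph (u v : R) : R :=
  dens N c th ph u v * Bfun N c th ph (Rabs u) (Rabs v).

Definition has_int (f : R -> R) (a b I : R) : Prop :=
  exists pr : Riemann_integrable f a b, RiemannInt pr = I.

Definition has_int_square (g : R -> R -> R) (L I : R) : Prop :=
  exists h : R -> R,
    (forall u, has_int (fun v => g u v) (- L) L (h u)) /\ has_int h (- L) L I.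

Definition improper_int2 (g : R -> R -> R) (I : R) : Prop :=
  forall eps, 0 < eps -> exists M, forall L, M <= L ->
    exists J, has_int_square g L J /\ Rabs (J - I) < eps.

(** Q(rho) = sup_{theta,phi} of the integral. *)
Definition Qset N c : R -> Prop :=
  fun x => exists th ph, improper_int2 (Qintegrand N c th ph) x.

Definition sgn (x : R) : R :=
  if Rlt_dec 0 x then 1 else if Rlt_dec x 0 then -1 else 0.

(** The states (coefficients c m n of |m,n>); s = +1 or -1 selects the sign. *)
Definition PhiSt (p s : R) (m n : nat) : R :=
  match m, n with
  | O, O => sqrt p
  | S O, S O => s * sqrt (1 - p)
  | _, _ => 0
  end.
Definition PsiSt (p s : R) (m n : nat) : R :=
  match m, n with
  | O, S O => sqrt p
  | S O, O => s * sqrt (1 - p)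
  | _, _ => 0
  end.

(** Density matrix of the two-qubit-like block span{|m,n> : m,n in {0,1}},
    index i = 2m + n; entries <m,n|rho|m',n'> = c m n * c m' n'. *)
Definition rho4 (c : nat -> nat -> R) (i j : nat) : R :=
  c (i / 2)%nat (i mod 2)%nat * c (j / 2)%nat (j mod 2)%nat.

(** Partial transpose on mode A:  <m,n|rho^{T_A}|m',n'> = <m',n|rho|m,n'>. *)
Definition ptA (M : nat -> nat -> R) (i j : nat) : R :=
  M (2 * (j / 2) + i mod 2)%nat (2 * (i / 2) + j mod 2)%nat.

(** Negativity of a real symmetric 4x4 matrix M is N: there is an orthonormal
    eigenbasis v_0..v_3 with eigenvalues lam_0..lam_3 and N is the sum of the
    absolute values of the negative eigenvalues, i.e. N = (||M||_1 - 1)/2 for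
    a unit-trace M. *)
Definition negativity_is (M : nat -> nat -> R) (Nv : R) : Prop :=
  exists (v : nat -> nat -> R) (lam : nat -> R),
    (forall a b, (a < 4)%nat -> (b < 4)%nat ->
       fsum 4 (fun k => v a k * v b k) = if Nat.eqb a b then 1 else 0) /\
    (forall a i, (a < 4)%nat -> (i < 4)%nat ->
       fsum 4 (fun j => M i j * v a j) = lam a * v a i) /\
    Nv = fsum 4 (fun a => Rmax 0 (- lam a)).

(* For each of the four states the joint density splits as f(u,v) = E(u,v) + K A(u) A(v), where
   E = p X(u)Y(v) + (1-p) Z(u)W(v) is even in each variable (X, Y, Z, W are Fock densities
   |psi_n|^2), A = psi_0 psi_1 = sqrt(2/pi) x exp(-x^2) is odd, and K = 2 s sqrt(p(1-p)) cos(theta +- phi).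
   Hence the sign-binned sums are S = 4E and D = 4 K A(u) A(v), and since XZ = YW = A^2, AM-GM gives
   |K A(u) A(v)| <= E.  So f B = |K| |A(u)| |A(v)| + (a term odd in v), whose integral over [-L,L]^2 is
   |K| (int |A|)^2 = (2/pi) |K| (1 - exp(-L^2))^2 -> (2/pi) |K|, largest at theta = phi = 0.  In the
   same way f sgn(uv) integrates to K (int |A|)^2.  The negativity is read off the explicit spectrum
   {p, 1-p, s sqrt(p(1-p)), -s sqrt(p(1-p))} of the partial transpose. *)

From Stdlib Require Import Reals Factorial Lra Lia.
From Coquelicot Require Import Coquelicot.
Open Scope R_scope.

Lemma has_int_of_is_RInt (f : R -> R) a b I : is_RInt f a b I -> has_int f a b I.
Proof.
  intro hf. exists (ex_RInt_Reals_0 f a b (ex_intro _ I hf)).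
  rewrite <- RInt_Reals. exact (is_RInt_unique f a b I hf).
Qed.

Lemma is_RInt_of_has_int (f : R -> R) a b I : has_int f a b I -> is_RInt f a b I.
Proof.
  intros [pr <-]. rewrite <- RInt_Reals. exact (RInt_correct f a b (ex_RInt_Reals_1 f a b pr)).
Qed.

Lemma is_RInt_lin (f g : R -> R) a b k If Ig :
  is_RInt f a b If -> is_RInt g a b Ig -> is_RInt (fun x => k * f x + g x) a b (k * If + Ig).
Proof. intros hf hg. exact (is_RInt_plus _ _ a b _ _ (is_RInt_scal f a b k If hf) hg). Qed.

Lemma has_int_square_unique g L J1 J2 :
  has_int_square g L J1 -> has_int_square g L J2 -> J1 = J2.
Proof.
  intros [h1 [inner1 outer1]] [h2 [inner2 outer2]].
  assert (h12 : forall u, h1 u = h2 u).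
  { intro u. rewrite <- (is_RInt_unique _ _ _ _ (is_RInt_of_has_int _ _ _ _ (inner1 u))).
    exact (is_RInt_unique _ _ _ _ (is_RInt_of_has_int _ _ _ _ (inner2 u))). }
  apply is_RInt_of_has_int in outer1, outer2.
  rewrite <- (is_RInt_unique _ _ _ _ outer2).
  symmetry. apply is_RInt_unique, (is_RInt_ext h1); auto.
Qed.

Lemma has_int_square_separable (g : R -> R -> R) (a : R -> R) k L :
  ex_RInt a (- L) L ->
  (forall u, is_RInt (g u) (- L) L (k * a u * RInt a (- L) L)) ->
  has_int_square g L (k * RInt a (- L) L ^ 2).
Proof.
  intros a_int inner.
  exists (fun u => k * a u * RInt a (- L) L). split.
  - intro u. apply has_int_of_is_RInt, inner.
  - apply has_int_of_is_RInt.
    apply (is_RInt_ext (fun u => (k * RInt a (- L) L) * a u)); [intros; simpl; ring |].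
    replace (k * RInt a (- L) L ^ 2) with ((k * RInt a (- L) L) * RInt a (- L) L) by ring.
    exact (is_RInt_scal _ _ _ _ _ (RInt_correct _ _ _ a_int)).
Qed.

Lemma improper_int2_unique g I1 I2 : improper_int2 g I1 -> improper_int2 g I2 -> I1 = I2.
Proof.
  intros H1 H2.
  assert (close : forall eps, 0 < eps -> Rabs (I1 - I2) < 2 * eps).
  { intros eps heps.
    destruct (H1 eps heps) as [M1 HM1], (H2 eps heps) as [M2 HM2].
    destruct (HM1 (Rmax M1 M2) (Rmax_l _ _)) as [J1 [hJ1 e1]].
    destruct (HM2 (Rmax M1 M2) (Rmax_r _ _)) as [J2 [hJ2 e2]].
    rewrite (has_int_square_unique _ _ _ _ hJ1 hJ2) in e1.
    apply Rabs_def2 in e1 as [e1u e1l], e2 as [e2u e2l].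
    apply Rabs_def1; lra. }
  destruct (Req_dec I1 I2) as [e | ne]; [exact e |].
  pose proof (Rabs_pos_lt _ (Rminus_eq_contra _ _ ne)) as gap.
  pose proof (close (Rabs (I1 - I2) / 2) ltac:(lra)). lra.
Qed.

Lemma is_RInt_odd (f : R -> R) L :
  ex_RInt f (- L) L -> (forall x, f (- x) = - f x) -> is_RInt f (- L) L 0.
Proof.
  intros hf f_odd.
  pose proof (RInt_correct _ _ _ hf) as hI.
  pose proof (is_RInt_comp_opp f L (- L) _ ltac:(rewrite Ropp_involutive; exact hI)) as hrev.
  apply (is_RInt_ext _ f) in hrev; [| intros x _; rewrite f_odd; apply Ropp_involutive].
  apply is_RInt_swap, (is_RInt_unique (V := R_CompleteNormedModule)) in hrev.
  replace 0 with (RInt f (- L) L); [exact hI |].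
  change (opp ?x) with (- x) in hrev. lra.
Qed.

Lemma improper_int2_of_squares (g : R -> R -> R) V :
  (forall L, 0 <= L -> has_int_square g L (V * (1 - exp (- L ^ 2)) ^ 2)) -> improper_int2 g V.
Proof.
  intros squares eps heps.
  set (a := Rabs V).
  assert (ha : 0 <= a) by apply Rabs_pos.
  exists (2 * a / eps + 1). intros L hL.
  assert (L_ge1 : 1 <= L) by (assert (0 <= 2 * a / eps) by (apply Rdiv_le_0_compat; lra); lra).
  exists (V * (1 - exp (- L ^ 2)) ^ 2). split; [apply squares; lra |].
  assert (small : 2 * a < eps * L).
  { apply Rmult_le_compat_l with (r := eps) in hL; [| lra].
    replace (eps * (2 * a / eps + 1)) with (2 * a + eps) in hL by (field; lra). lra. }
  assert (growth : L < exp (L ^ 2)).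
  { pose proof (exp_ineq1_le (L ^ 2)). pose proof (pow2_ge_0 (L - 1 / 2)). nra. }
  assert (inv : exp (- L ^ 2) * exp (L ^ 2) = 1).
  { rewrite <- exp_plus. replace (- L ^ 2 + L ^ 2) with 0 by ring. apply exp_0. }
  pose proof (exp_pos (- L ^ 2)). pose proof (exp_pos (L ^ 2)).
  set (e := exp (- L ^ 2)) in *. set (E := exp (L ^ 2)) in *.
  assert (e_le1 : e <= 1) by nra.
  replace (V * (1 - e) ^ 2 - V) with (- V * (e * (2 - e))) by ring.
  rewrite Rabs_mult, Rabs_Ropp, (Rabs_right (e * (2 - e))) by nra. fold a.
  apply Rle_lt_trans with (2 * a * e); [nra |].
  apply Rlt_le_trans with (eps * L * e); [nra |].
  replace eps with (eps * E * e) at 2 by (rewrite Rmult_assoc, (Rmult_comm E), inv; ring).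
  apply Rmult_le_compat_r; [lra |]. apply Rmult_le_compat_l; lra.
Qed.

Lemma sgn_pos x : 0 < x -> sgn x = 1.
Proof. intro hx. unfold sgn. destruct (Rlt_dec 0 x); [reflexivity | lra]. Qed.

Lemma sgn_neg x : x < 0 -> sgn x = -1.
Proof.
  intro hx. unfold sgn. destruct (Rlt_dec 0 x); [lra |].
  destruct (Rlt_dec x 0); [reflexivity | lra].
Qed.

Lemma sgn_0 : sgn 0 = 0.
Proof. unfold sgn. destruct (Rlt_dec 0 0); [lra |]. destruct (Rlt_dec 0 0); [lra | reflexivity]. Qed.

Lemma sgn_cases x : (0 < x /\ sgn x = 1) \/ (x = 0 /\ sgn x = 0) \/ (x < 0 /\ sgn x = -1).
Proof.
  destruct (Rtotal_order x 0) as [hx | [-> | hx]].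
  - right; right. split; [exact hx | apply sgn_neg, hx].
  - right; left. split; [reflexivity | apply sgn_0].
  - left. split; [exact hx | apply sgn_pos, hx].
Qed.

Lemma sgn_opp x : sgn (- x) = - sgn x.
Proof.
  destruct (sgn_cases x) as [[hx ->] | [[-> ->] | [hx ->]]].
  - rewrite sgn_neg; lra.
  - rewrite Ropp_0, sgn_0; ring.
  - rewrite sgn_pos; lra.
Qed.

Lemma sgn_mult x y : sgn (x * y) = sgn x * sgn y.
Proof.
  destruct (sgn_cases x) as [[hx ->] | [[-> ->] | [hx ->]]];
  destruct (sgn_cases y) as [[hy ->] | [[-> ->] | [hy ->]]];
  rewrite ?Rmult_0_l, ?Rmult_0_r, ?sgn_0; try ring;
  first [rewrite sgn_pos by nra | rewrite sgn_neg by nra]; ring.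
Qed.

Lemma mult_sgn x : x * sgn x = Rabs x.
Proof.
  destruct (sgn_cases x) as [[hx ->] | [[-> ->] | [hx ->]]].
  - rewrite Rabs_right; lra.
  - rewrite Rabs_R0; ring.
  - rewrite Rabs_left; lra.
Qed.

Lemma ex_RInt_mult_sgn (e : R -> R) L :
  0 <= L -> (forall x, continuous e x) -> ex_RInt (fun x => e x * sgn x) (- L) L.
Proof.
  intros hL e_cont.
  assert (e_int : forall a b, ex_RInt e a b)
    by (intros; apply (ex_RInt_continuous (V := R_CompleteNormedModule)); auto).
  apply ex_RInt_Chasles with 0.
  - apply (ex_RInt_ext (fun x => - e x)).
    + rewrite Rmin_left, Rmax_right by lra. intros x hx. rewrite sgn_neg by lra. simpl. ring.
    + exact (ex_RInt_opp _ _ _ (e_int _ _)).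
  - apply (ex_RInt_ext e).
    + rewrite Rmin_left, Rmax_right by lra. intros x hx. rewrite sgn_pos by lra. simpl. ring.
    + apply e_int.
Qed.

Lemma is_RInt_gauss_odd a b :
  is_RInt (fun x => x * exp (- x ^ 2)) a b ((exp (- a ^ 2) - exp (- b ^ 2)) / 2).
Proof.
  assert (prim : forall x, is_derive (fun x => - exp (- x ^ 2) / 2) x (x * exp (- x ^ 2))).
  { intro x. auto_derive; [exact I |]. replace (- (x * (x * 1))) with (- x ^ 2) by ring. field. }
  pose proof (is_RInt_derive _ _ a b (fun x _ => prim x)) as h.
  assert (cont : forall x, continuous (fun x => x * exp (- x ^ 2)) x).
  { intro x. apply (ex_derive_continuous (K := R_AbsRing) (V := R_NormedModule)).
    auto_derive. exact I. }
  specialize (h (fun x _ => cont x)).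
  unfold minus, plus, opp in h; simpl in h.
  replace ((exp (- a ^ 2) - exp (- b ^ 2)) / 2)
    with (- exp (- b ^ 2) / 2 + - (- exp (- a ^ 2) / 2)) by field.
  exact h.
Qed.

Lemma is_RInt_gauss_odd_sgn L :
  0 <= L -> is_RInt (fun x => x * exp (- x ^ 2) * sgn x) (- L) L (1 - exp (- L ^ 2)).
Proof.
  intro hL.
  assert (half : forall a, (exp (- a ^ 2) - exp (- 0 ^ 2)) / 2 = - ((1 - exp (- a ^ 2)) / 2)).
  { intro a. replace (- 0 ^ 2) with 0 by ring. rewrite exp_0. field. }
  assert (left : is_RInt (fun x => x * exp (- x ^ 2) * sgn x) (- L) 0 ((1 - exp (- L ^ 2)) / 2)).
  { apply (is_RInt_ext (fun x => - (x * exp (- x ^ 2)))).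
    - rewrite Rmin_left, Rmax_right by lra. intros x hx. rewrite sgn_neg by lra. simpl. ring.
    - pose proof (is_RInt_opp _ _ _ _ (is_RInt_gauss_odd (- L) 0)) as h.
      rewrite half, Ropp_involutive in h. replace ((- L) ^ 2) with (L ^ 2) in h by ring. exact h. }
  assert (right : is_RInt (fun x => x * exp (- x ^ 2) * sgn x) 0 L ((1 - exp (- L ^ 2)) / 2)).
  { apply (is_RInt_ext (fun x => x * exp (- x ^ 2))).
    - rewrite Rmin_left, Rmax_right by lra. intros x hx. rewrite sgn_pos by lra. simpl. ring.
    - pose proof (is_RInt_gauss_odd 0 L) as h.
      replace (- 0 ^ 2) with 0 in h by ring. rewrite exp_0 in h. exact h. }
  replace (1 - exp (- L ^ 2)) with ((1 - exp (- L ^ 2)) / 2 + (1 - exp (- L ^ 2)) / 2) by field.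
  exact (is_RInt_Chasles _ _ _ _ _ _ left right).
Qed.

Lemma weighted_amgm (a b P Q t : R) :
  0 <= P -> 0 <= Q -> 0 <= t -> t ^ 2 = P * Q -> 0 <= a -> 0 <= b ->
  2 * a * b * t <= a ^ 2 * P + b ^ 2 * Q.
Proof.
  intros hP hQ ht htPQ ha hb.
  assert (key : (a ^ 2 * P + b ^ 2 * Q) ^ 2 - (2 * a * b * t) ^ 2 = (a ^ 2 * P - b ^ 2 * Q) ^ 2).
  { replace ((2 * a * b * t) ^ 2) with (4 * a ^ 2 * b ^ 2 * t ^ 2) by ring. rewrite htPQ. ring. }
  assert (0 <= a ^ 2 * P + b ^ 2 * Q)
    by (apply Rplus_le_le_0_compat; apply Rmult_le_pos; try apply pow2_ge_0; lra).
  assert (0 <= 2 * a * b * t) by (repeat apply Rmult_le_pos; lra).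
  pose proof (pow2_ge_0 (a ^ 2 * P - b ^ 2 * Q)). nra.
Qed.

(* [Ssum], [Ddiff] and [Bfun] of the definitions, for an arbitrary density [d]. *)
Definition sign_sum (d : R -> R -> R) u v := d u v + d (- u) (- v) + d u (- v) + d (- u) v.
Definition sign_diff (d : R -> R -> R) u v := d u v + d (- u) (- v) - d u (- v) - d (- u) v.
Definition sign_bias (d : R -> R -> R) u v :=
  if Req_dec_T (sign_sum d u v) 0 then 0 else Rabs (sign_diff d u v) / sign_sum d u v.

Lemma Qintegrand_sign_bias N c th ph :
  Qintegrand N c th ph = fun u v => dens N c th ph u v * sign_bias (dens N c th ph) (Rabs u) (Rabs v).
Proof. reflexivity. Qed.

Lemma even_Rabs (f : R -> R) x : (forall x, f (- x) = f x) -> f (Rabs x) = f x.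
Proof.
  intro f_even. destruct (Rcase_abs x) as [hx | hx].
  - rewrite Rabs_left by exact hx. apply f_even.
  - rewrite Rabs_right by exact hx. reflexivity.
Qed.

Lemma odd_Rabs (f : R -> R) x : (forall x, f (- x) = - f x) -> Rabs (f (Rabs x)) = Rabs (f x).
Proof.
  intro f_odd. destruct (Rcase_abs x) as [hx | hx].
  - rewrite (Rabs_left x) by exact hx. rewrite f_odd. apply Rabs_Ropp.
  - rewrite (Rabs_right x) by exact hx. reflexivity.
Qed.

Section EvenPlusCross.

Variables (p : R) (X Y Z W A : R -> R).
Hypothesis p_range : 0 <= p <= 1.
Hypotheses (X_even : forall x, X (- x) = X x) (Y_even : forall x, Y (- x) = Y x)
           (Z_even : forall x, Z (- x) = Z x) (W_even : forall x, W (- x) = W x).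
Hypotheses (X_ge0 : forall x, 0 <= X x) (Y_ge0 : forall x, 0 <= Y x)
           (Z_ge0 : forall x, 0 <= Z x) (W_ge0 : forall x, 0 <= W x).
Hypothesis YW_pos : forall x, 0 < Y x + W x.
Hypotheses (XZ_eq : forall x, X x * Z x = A x ^ 2) (YW_eq : forall x, Y x * W x = A x ^ 2).
Hypothesis A_odd : forall x, A (- x) = - A x.
Hypotheses (Y_cont : forall x, continuous Y x) (W_cont : forall x, continuous W x)
           (A_cont : forall x, continuous A x).

Definition even_part u v := p * (X u * Y v) + (1 - p) * (Z u * W v).

Lemma even_part_opp_l u v : even_part (- u) v = even_part u v.
Proof. unfold even_part. rewrite X_even, Z_even. reflexivity. Qed.

Lemma even_part_opp_r u v : even_part u (- v) = even_part u v.
Proof. unfold even_part. rewrite Y_even, W_even. reflexivity. Qed.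

Lemma continuous_even_part_r u v : continuous (even_part u) v.
Proof.
  apply (continuous_plus (fun v => p * (X u * Y v)) (fun v => (1 - p) * (Z u * W v))).
  - apply (continuous_mult (fun _ => p)); [apply continuous_const |].
    apply (continuous_mult (fun _ => X u)); [apply continuous_const | apply Y_cont].
  - apply (continuous_mult (fun _ => 1 - p)); [apply continuous_const |].
    apply (continuous_mult (fun _ => Z u)); [apply continuous_const | apply W_cont].
Qed.

Section FixedCoupling.

Variables (K : R) (d : R -> R -> R).
Hypothesis d_eq : forall u v, d u v = even_part u v + K * A u * A v.

Lemma sign_sum_eq u v : sign_sum d u v = 4 * even_part u v.
Proof.
  unfold sign_sum. rewrite !d_eq, !even_part_opp_l, !even_part_opp_r, !A_odd. ring.
Qed.

Lemma sign_diff_eq u v : sign_diff d u v = 4 * (K * A u * A v).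
Proof.
  unfold sign_diff. rewrite !d_eq, !even_part_opp_l, !even_part_opp_r, !A_odd. ring.
Qed.

Lemma sign_bias_Rabs u v : sign_bias d (Rabs u) (Rabs v) = Rabs (K * A u * A v) / even_part u v.
Proof.
  unfold sign_bias. rewrite sign_sum_eq, sign_diff_eq, Rabs_mult, (Rabs_right 4) by lra.
  rewrite (even_Rabs (fun w => even_part w (Rabs v))) by (intro; apply even_part_opp_l).
  rewrite (even_Rabs (even_part u)) by (intro; apply even_part_opp_r).
  rewrite !Rabs_mult, !(odd_Rabs A) by exact A_odd. rewrite <- !Rabs_mult.
  destruct (Req_dec_T (4 * even_part u v) 0) as [e | ne].
  - replace (even_part u v) with 0 by lra. unfold Rdiv. rewrite Rinv_0. ring.
  - field. lra.
Qed.

Lemma sign_corr_split u v :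
  d u v * sgn (u * v) =
  sgn u * p * X u * (Y v * sgn v)
  + (sgn u * (1 - p) * Z u * (W v * sgn v) + K * (A u * sgn u) * (A v * sgn v)).
Proof. rewrite d_eq, sgn_mult. unfold even_part. ring. Qed.

Lemma has_int_square_sign_corr L :
  0 <= L ->
  has_int_square (fun u v => d u v * sgn (u * v)) L (K * RInt (fun x => A x * sgn x) (- L) L ^ 2).
Proof.
  intro hL.
  assert (odd_int : forall e, (forall x, continuous e x) -> (forall x, e (- x) = e x) ->
                     is_RInt (fun x => e x * sgn x) (- L) L 0).
  { intros e e_cont e_even. apply is_RInt_odd; [apply ex_RInt_mult_sgn; auto |].
    intro x. rewrite e_even, sgn_opp. ring. }
  apply has_int_square_separable; [apply ex_RInt_mult_sgn; auto |].
  intro u. apply (is_RInt_ext _ _ _ _ _ (fun v _ => eq_sym (sign_corr_split u v))).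
  replace (K * (A u * sgn u) * RInt (fun x => A x * sgn x) (- L) L)
    with (sgn u * p * X u * 0
          + (sgn u * (1 - p) * Z u * 0 + K * (A u * sgn u) * RInt (fun x => A x * sgn x) (- L) L))
    by ring.
  apply is_RInt_lin; [auto |].
  apply is_RInt_lin; [auto |].
  apply (is_RInt_scal (fun x => A x * sgn x)), (RInt_correct (V := R_CompleteNormedModule)).
  apply ex_RInt_mult_sgn; auto.
Qed.

Hypothesis K_le : Rabs K <= 2 * sqrt p * sqrt (1 - p).

Lemma Rabs_cross_le u v : Rabs (K * A u * A v) <= even_part u v.
Proof.
  pose proof (sqrt_pos p). pose proof (sqrt_pos (1 - p)).
  rewrite !Rabs_mult.
  apply Rle_trans with (2 * sqrt p * sqrt (1 - p) * (Rabs (A u) * Rabs (A v))).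
  { rewrite Rmult_assoc. apply Rmult_le_compat_r; [apply Rmult_le_pos; apply Rabs_pos | exact K_le]. }
  replace (even_part u v) with (sqrt p ^ 2 * (X u * Y v) + sqrt (1 - p) ^ 2 * (Z u * W v))
    by (unfold even_part; rewrite !pow2_sqrt by lra; reflexivity).
  apply weighted_amgm; auto using Rmult_le_pos, Rabs_pos.
  rewrite Rpow_mult_distr, !pow2_abs, <- XZ_eq, <- YW_eq. ring.
Qed.

(* Rocq's [x / 0 = 0] makes [cross_ratio] vanish wherever [even_part] does. *)
Definition cross_ratio u v := K * A u * A v * Rabs (K * A u * A v) / even_part u v.

Lemma Qintegrand_split u v :
  d u v * sign_bias d (Rabs u) (Rabs v) = Rabs K * Rabs (A u) * Rabs (A v) + cross_ratio u v.
Proof.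
  rewrite sign_bias_Rabs, d_eq, <- !Rabs_mult. unfold cross_ratio.
  destruct (Req_dec (even_part u v) 0) as [e | ne].
  - assert (cross0 : K * A u * A v = 0).
    { destruct (Req_dec (K * A u * A v) 0) as [z | nz]; [exact z |].
      pose proof (Rabs_pos_lt _ nz). pose proof (Rabs_cross_le u v). lra. }
    rewrite e, cross0, Rabs_R0. unfold Rdiv. ring.
  - field. exact ne.
Qed.

Lemma cross_ratio_opp_r u v : cross_ratio u (- v) = - cross_ratio u v.
Proof.
  unfold cross_ratio. rewrite A_odd, even_part_opp_r.
  replace (K * A u * - A v) with (- (K * A u * A v)) by ring.
  rewrite Rabs_Ropp. unfold Rdiv. ring.
Qed.

Lemma even_part_pos_or_cross_zero u : (forall v, 0 < even_part u v) \/ K * A u = 0.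
Proof.
  destruct (Req_dec (K * A u) 0) as [z | nz]; [right; exact z | left; intro v].
  assert (K_nz : K <> 0) by (intro; apply nz; subst; ring).
  assert (A_nz : A u <> 0) by (intro h; apply nz; rewrite h; ring).
  assert (XZ_pos : 0 < X u * Z u)
    by (rewrite XZ_eq; pose proof (Rsqr_pos_lt _ A_nz); unfold Rsqr in *; lra).
  pose proof (X_ge0 u). pose proof (Z_ge0 u).
  assert (X_pos : 0 < X u) by nra. assert (Z_pos : 0 < Z u) by nra.
  assert (sqrt_pos : 0 < sqrt p * sqrt (1 - p)) by (pose proof (Rabs_pos_lt _ K_nz); lra).
  assert (p_pos : 0 < p).
  { destruct (Rle_lt_dec p 0) as [h | h]; [rewrite (sqrt_neg_0 p h) in sqrt_pos; lra | exact h]. }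
  assert (q_pos : 0 < 1 - p).
  { destruct (Rle_lt_dec (1 - p) 0) as [h | h]; [rewrite (sqrt_neg_0 _ h) in sqrt_pos; lra | exact h]. }
  pose proof (YW_pos v). pose proof (Y_ge0 v). pose proof (W_ge0 v).
  assert (0 < p * X u) by (apply Rmult_lt_0_compat; lra).
  assert (0 < (1 - p) * Z u) by (apply Rmult_lt_0_compat; lra).
  unfold even_part. destruct (Rlt_or_le 0 (Y v)); nra.
Qed.

Lemma continuous_cross_ratio u v : continuous (cross_ratio u) v.
Proof.
  destruct (even_part_pos_or_cross_zero u) as [pos | zero].
  - assert (cross_cont : continuous (fun v => K * A u * A v) v).
    { apply (continuous_mult (fun _ => K * A u) A); [apply continuous_const | apply A_cont]. }
    unfold cross_ratio, Rdiv.
    apply (continuous_mult (fun v => K * A u * A v * Rabs (K * A u * A v)) (fun v => / even_part u v)).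
    + apply (continuous_mult (fun v => K * A u * A v)); [exact cross_cont |].
      apply continuous_Rabs_comp, cross_cont.
    + apply continuous_Rinv_comp; [apply continuous_even_part_r | apply Rgt_not_eq, pos].
  - apply (continuous_ext (fun _ => 0)); [| apply continuous_const].
    intro w. unfold cross_ratio. rewrite zero. simpl. unfold Rdiv. ring.
Qed.

Lemma has_int_square_Qintegrand L :
  0 <= L ->
  has_int_square (fun u v => d u v * sign_bias d (Rabs u) (Rabs v)) L
    (Rabs K * RInt (fun x => Rabs (A x)) (- L) L ^ 2).
Proof.
  intro hL.
  assert (abs_A_int : ex_RInt (fun x => Rabs (A x)) (- L) L).
  { apply (ex_RInt_continuous (V := R_CompleteNormedModule)).
    intros; apply continuous_Rabs_comp, A_cont. }
  apply has_int_square_separable; [exact abs_A_int |].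
  intro u. apply (is_RInt_ext _ _ _ _ _ (fun v _ => eq_sym (Qintegrand_split u v))).
  replace (Rabs K * Rabs (A u) * RInt (fun x => Rabs (A x)) (- L) L)
    with (Rabs K * Rabs (A u) * RInt (fun x => Rabs (A x)) (- L) L + 0) by ring.
  apply is_RInt_lin; [exact (RInt_correct (V := R_CompleteNormedModule) _ _ _ abs_A_int) |].
  apply is_RInt_odd; [| apply cross_ratio_opp_r].
  apply (ex_RInt_continuous (V := R_CompleteNormedModule)). intros; apply continuous_cross_ratio.
Qed.

End FixedCoupling.
End EvenPlusCross.

Lemma herm_pair_S n x :
  herm_pair (S n) x =
  (snd (herm_pair n x), 2 * x * snd (herm_pair n x) - 2 * INR (S n) * fst (herm_pair n x)).
Proof. simpl. destruct (herm_pair n x). reflexivity. Qed.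

Lemma herm_pair_opp n x :
  herm_pair n (- x) = ((-1) ^ n * fst (herm_pair n x), (-1) ^ S n * snd (herm_pair n x)).
Proof.
  induction n as [| n IH]; [simpl; f_equal; ring |].
  rewrite !herm_pair_S, IH. simpl. f_equal; ring.
Qed.

Lemma continuous_herm_pair n x :
  continuous (fun y => fst (herm_pair n y)) x /\ continuous (fun y => snd (herm_pair n y)) x.
Proof.
  revert x. induction n as [| n IH]; intro x.
  - split; [apply continuous_const |].
    apply (continuous_mult (fun _ => 2) id); [apply continuous_const | apply continuous_id].
  - destruct (IH x) as [fst_cont snd_cont]. split.
    + apply (continuous_ext (fun y => snd (herm_pair n y))); [intro; rewrite herm_pair_S; reflexivity |].
      exact snd_cont.
    + apply (continuous_ext
               (fun y => 2 * y * snd (herm_pair n y) + - (2 * INR (S n) * fst (herm_pair n y))));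
        [intro; rewrite herm_pair_S; reflexivity |].
      apply (continuous_plus (fun y => 2 * y * snd (herm_pair n y))
                             (fun y => - (2 * INR (S n) * fst (herm_pair n y)))).
      * apply (continuous_mult (fun y => 2 * y)); [| exact snd_cont].
        apply (continuous_mult (fun _ => 2) id); [apply continuous_const | apply continuous_id].
      * apply (continuous_opp (fun y => 2 * INR (S n) * fst (herm_pair n y))).
        apply (continuous_mult (fun _ => 2 * INR (S n))); [apply continuous_const | exact fst_cont].
Qed.

Lemma fock_wf_opp n x : fock_wf n (- x) = (-1) ^ n * fock_wf n x.
Proof.
  unfold fock_wf, hermite. rewrite herm_pair_opp. simpl fst.
  replace ((- x) ^ 2) with (x ^ 2) by ring. unfold Rdiv. ring.
Qed.

Lemma continuous_fock_wf n x : continuous (fock_wf n) x.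
Proof.
  apply (continuous_ext
           (fun y => fst (herm_pair n y) * (exp (- y ^ 2 / 2) / sqrt (2 ^ n * INR (fact n) * sqrt PI))));
    [intro; unfold fock_wf, hermite, Rdiv; simpl; ring |].
  apply (continuous_mult (fun y => fst (herm_pair n y))); [apply continuous_herm_pair |].
  apply (ex_derive_continuous (K := R_AbsRing) (V := R_NormedModule)). auto_derive. exact I.
Qed.

Lemma fock_wf_0 x : fock_wf 0 x = exp (- x ^ 2 / 2) / sqrt (sqrt PI).
Proof. unfold fock_wf, hermite. simpl. rewrite !Rmult_1_l. reflexivity. Qed.

Lemma fock_wf_1 x : fock_wf 1 x = 2 * x * exp (- x ^ 2 / 2) / sqrt (2 * sqrt PI).
Proof.
  unfold fock_wf, hermite. simpl. replace (2 * 1 * 1 * sqrt PI) with (2 * sqrt PI) by ring. reflexivity.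
Qed.

Lemma fock_wf_0_pos x : 0 < fock_wf 0 x.
Proof.
  rewrite fock_wf_0. apply Rdiv_lt_0_compat; [apply exp_pos |].
  apply sqrt_lt_R0, sqrt_lt_R0, PI_RGT_0.
Qed.

Definition fock_pdf (n : nat) (x : R) : R := fock_wf n x ^ 2.

Lemma fock_pdf_ge0 n x : 0 <= fock_pdf n x.
Proof. apply pow2_ge_0. Qed.

Lemma fock_pdf_opp n x : fock_pdf n (- x) = fock_pdf n x.
Proof.
  unfold fock_pdf. rewrite fock_wf_opp, Rpow_mult_distr, <- pow_mult, Nat.mul_comm, pow_mult.
  replace ((-1) ^ 2) with 1 by ring. rewrite pow1. ring.
Qed.

Lemma continuous_fock_pdf n x : continuous (fock_pdf n) x.
Proof.
  apply (continuous_ext (fun y => fock_wf n y * fock_wf n y)); [intro; unfold fock_pdf; simpl; ring |].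
  apply (continuous_mult (fock_wf n) (fock_wf n)); apply continuous_fock_wf.
Qed.

Lemma fock_pdf_0_pos x : 0 < fock_pdf 0 x.
Proof. apply pow_lt, fock_wf_0_pos. Qed.

Definition interference (x : R) : R := fock_wf 0 x * fock_wf 1 x.

Lemma interference_eq x : interference x = sqrt (2 / PI) * (x * exp (- x ^ 2)).
Proof.
  unfold interference. rewrite fock_wf_0, fock_wf_1.
  pose proof PI_RGT_0 as pi_pos.
  assert (sqrt_pi_pos : 0 < sqrt PI) by (apply sqrt_lt_R0; lra).
  assert (A_pos : 0 < sqrt (sqrt PI)) by (apply sqrt_lt_R0; lra).
  assert (B_pos : 0 < sqrt (2 * sqrt PI)) by (apply sqrt_lt_R0; lra).
  assert (constants : sqrt (2 / PI) = 2 / (sqrt (sqrt PI) * sqrt (2 * sqrt PI))).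
  { rewrite <- sqrt_mult_alt by lra.
    replace (sqrt PI * (2 * sqrt PI)) with (2 * PI)
      by (pose proof (sqrt_sqrt PI (Rlt_le _ _ pi_pos)); lra).
    rewrite <- (sqrt_square 2) at 2 by lra.
    rewrite <- sqrt_div_alt by lra. f_equal. field. lra. }
  assert (gauss : exp (- x ^ 2 / 2) * exp (- x ^ 2 / 2) = exp (- x ^ 2))
    by (rewrite <- exp_plus; f_equal; field).
  rewrite constants, <- gauss. field. lra.
Qed.

Lemma interference_opp x : interference (- x) = - interference x.
Proof. unfold interference. rewrite !fock_wf_opp. ring. Qed.

Lemma continuous_interference x : continuous interference x.
Proof. apply (continuous_mult (fock_wf 0) (fock_wf 1)); apply continuous_fock_wf. Qed.

Lemma fock_pdf_pair_mult n x : (n <= 1)%nat -> fock_pdf n x * fock_pdf (1 - n) x = interference x ^ 2.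
Proof.
  intro hn. unfold fock_pdf, interference. destruct n as [| [| n]]; simpl; [ring | ring | lia].
Qed.

Lemma fock_pdf_pair_pos n x : (n <= 1)%nat -> 0 < fock_pdf n x + fock_pdf (1 - n) x.
Proof.
  intro hn. pose proof (fock_pdf_0_pos x). pose proof (fock_pdf_ge0 1 x).
  destruct n as [| [| n]]; simpl; lra || lia.
Qed.

Lemma interference_mult_sgn x : interference x * sgn x = Rabs (interference x).
Proof.
  rewrite interference_eq, !Rabs_mult, <- (mult_sgn x).
  rewrite (Rabs_right (sqrt _)) by apply Rle_ge, sqrt_pos.
  rewrite (Rabs_right (exp _)) by apply Rle_ge, Rlt_le, exp_pos. ring.
Qed.

Lemma is_RInt_interference_mult_sgn L :
  0 <= L -> is_RInt (fun x => interference x * sgn x) (- L) L (sqrt (2 / PI) * (1 - exp (- L ^ 2))).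
Proof.
  intro hL.
  apply (is_RInt_ext (fun x => sqrt (2 / PI) * (x * exp (- x ^ 2) * sgn x))).
  - intros x _. rewrite interference_eq. simpl. ring.
  - exact (is_RInt_scal _ _ _ _ _ (is_RInt_gauss_odd_sgn L hL)).
Qed.

Lemma RInt_abs_interference_sq L :
  0 <= L -> RInt (fun x => Rabs (interference x)) (- L) L ^ 2 = 2 / PI * (1 - exp (- L ^ 2)) ^ 2.
Proof.
  intro hL.
  rewrite (RInt_ext _ (fun x => interference x * sgn x))
    by (intros; apply eq_sym, interference_mult_sgn).
  rewrite (is_RInt_unique _ _ _ _ (is_RInt_interference_mult_sgn L hL)).
  rewrite Rpow_mult_distr, pow2_sqrt; [reflexivity |].
  apply Rlt_le, Rdiv_lt_0_compat; [lra | apply PI_RGT_0].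
Qed.

Lemma dens_PhiSt p s th ph u v :
  0 <= p <= 1 -> s * s = 1 ->
  dens 2 (PhiSt p s) th ph u v =
  even_part p (fock_pdf 0) (fock_pdf 0) (fock_pdf 1) (fock_pdf 1) u v
  + 2 * s * sqrt p * sqrt (1 - p) * cos (th + ph) * interference u * interference v.
Proof.
  intros hp hs.
  unfold dens, ampRe, ampIm, even_part, fock_pdf, interference. cbn [fsum PhiSt INR].
  rewrite !Rmult_0_l, !Rplus_0_l, !Rmult_1_l, cos_0, sin_0.
  pose proof (sin2_cos2 (th + ph)) as trig. unfold Rsqr in trig.
  pose proof (sqrt_sqrt p ltac:(lra)) as sq_p.
  pose proof (sqrt_sqrt (1 - p) ltac:(lra)) as sq_q.
  set (co := cos (th + ph)) in *. set (si := sin (th + ph)) in *.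
  transitivity (sqrt p * sqrt p * (fock_wf 0 u ^ 2 * fock_wf 0 v ^ 2)
    + s * s * (sqrt (1 - p) * sqrt (1 - p)) * (si * si + co * co) * (fock_wf 1 u ^ 2 * fock_wf 1 v ^ 2)
    + 2 * s * sqrt p * sqrt (1 - p) * co * (fock_wf 0 u * fock_wf 1 u) * (fock_wf 0 v * fock_wf 1 v));
    [ring |].
  rewrite hs, trig, sq_p, sq_q. ring.
Qed.

Lemma dens_PsiSt p s th ph u v :
  0 <= p <= 1 -> s * s = 1 ->
  dens 2 (PsiSt p s) th ph u v =
  even_part p (fock_pdf 0) (fock_pdf 1) (fock_pdf 1) (fock_pdf 0) u v
  + 2 * s * sqrt p * sqrt (1 - p) * cos (th - ph) * interference u * interference v.
Proof.
  intros hp hs.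
  unfold dens, ampRe, ampIm, even_part, fock_pdf, interference. cbn [fsum PsiSt INR].
  rewrite !Rmult_0_l, !Rplus_0_l, !Rplus_0_r, !Rmult_1_l, cos_minus.
  pose proof (sin2_cos2 th) as trig_th. pose proof (sin2_cos2 ph) as trig_ph. unfold Rsqr in *.
  pose proof (sqrt_sqrt p ltac:(lra)) as sq_p.
  pose proof (sqrt_sqrt (1 - p) ltac:(lra)) as sq_q.
  transitivity (sqrt p * sqrt p * (sin ph * sin ph + cos ph * cos ph)
      * (fock_wf 0 u ^ 2 * fock_wf 1 v ^ 2)
    + s * s * (sqrt (1 - p) * sqrt (1 - p)) * (sin th * sin th + cos th * cos th)
      * (fock_wf 1 u ^ 2 * fock_wf 0 v ^ 2)
    + 2 * s * sqrt p * sqrt (1 - p) * (cos th * cos ph + sin th * sin ph)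
      * (fock_wf 0 u * fock_wf 1 u) * (fock_wf 0 v * fock_wf 1 v));
    [ring |].
  rewrite hs, trig_th, trig_ph, sq_p, sq_q. ring.
Qed.

Lemma is_lub_Qset N c (V : R -> R -> R) :
  (forall th ph, improper_int2 (Qintegrand N c th ph) (V th ph)) ->
  (forall th ph, V th ph <= V 0 0) -> is_lub (Qset N c) (V 0 0).
Proof.
  intros HQ V_le. split.
  - intros x [th [ph hx]]. rewrite (improper_int2_unique _ _ _ hx (HQ th ph)). apply V_le.
  - intros b hb. apply hb. exists 0, 0. apply HQ.
Qed.

Section FockDecomposition.

(* [n = 0] gives the density of |Phi+->, [n = 1] that of |Psi+->. *)
Variables (p s : R) (n : nat) (c : nat -> nat -> R) (angle : R -> R -> R).
Hypotheses (p_range : 0 <= p <= 1) (s_sign : s = 1 \/ s = -1) (n_le1 : (n <= 1)%nat).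

Definition coupling th ph := 2 * s * sqrt p * sqrt (1 - p) * cos (angle th ph).

Hypothesis dens_eq : forall th ph u v,
  dens 2 c th ph u v =
  even_part p (fock_pdf 0) (fock_pdf n) (fock_pdf 1) (fock_pdf (1 - n)) u v
  + coupling th ph * interference u * interference v.

Lemma Rabs_coupling th ph :
  Rabs (coupling th ph) = 2 * sqrt p * sqrt (1 - p) * Rabs (cos (angle th ph)).
Proof.
  assert (Rabs_s : Rabs s = 1)
    by (destruct s_sign as [-> | ->]; [apply Rabs_R1 | rewrite Rabs_left; lra]).
  unfold coupling.
  rewrite !Rabs_mult, Rabs_s, (Rabs_right 2), (Rabs_right (sqrt p)), (Rabs_right (sqrt (1 - p)))
    by (apply Rle_ge; (apply sqrt_pos || lra)).
  ring.
Qed.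

Lemma Rabs_coupling_le th ph : Rabs (coupling th ph) <= 2 * sqrt p * sqrt (1 - p).
Proof.
  rewrite Rabs_coupling. pose proof (Rmult_le_pos _ _ (sqrt_pos p) (sqrt_pos (1 - p))).
  pose proof (Rabs_le (cos (angle th ph)) 1 (COS_bound _)). nra.
Qed.

Lemma improper_int2_Qintegrand th ph :
  improper_int2 (Qintegrand 2 c th ph) (Rabs (coupling th ph) * (2 / PI)).
Proof.
  assert (XZ : forall x, fock_pdf 0 x * fock_pdf 1 x = interference x ^ 2)
    by (intro; apply (fock_pdf_pair_mult 0); lia).
  apply improper_int2_of_squares. intros L hL.
  rewrite Rmult_assoc, <- (RInt_abs_interference_sq L hL), Qintegrand_sign_bias.
  apply has_int_square_Qintegrand with (p := p) (X := fock_pdf 0) (Y := fock_pdf n) (Z := fock_pdf 1)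
    (W := fock_pdf (1 - n)) (K := coupling th ph);
    auto using fock_pdf_opp, fock_pdf_ge0, fock_pdf_pair_pos, fock_pdf_pair_mult, interference_opp,
               continuous_fock_pdf, continuous_interference, Rabs_coupling_le.
Qed.

Lemma improper_int2_sign_corr :
  improper_int2 (fun u v => dens 2 c 0 0 u v * sgn (u * v)) (coupling 0 0 * (2 / PI)).
Proof.
  apply improper_int2_of_squares. intros L hL.
  replace (coupling 0 0 * (2 / PI) * (1 - exp (- L ^ 2)) ^ 2)
    with (coupling 0 0 * RInt (fun x => interference x * sgn x) (- L) L ^ 2).
  - apply has_int_square_sign_corr with (p := p) (X := fock_pdf 0) (Y := fock_pdf n)
      (Z := fock_pdf 1) (W := fock_pdf (1 - n));
      auto using fock_pdf_opp, continuous_fock_pdf, continuous_interference.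
  - rewrite (RInt_ext _ (fun x => Rabs (interference x))) by (intros; apply interference_mult_sgn).
    rewrite RInt_abs_interference_sq by exact hL. ring.
Qed.

Hypothesis angle_00 : angle 0 0 = 0.

Lemma Rabs_coupling_00 : Rabs (coupling 0 0) * (2 / PI) = 4 / PI * sqrt (p * (1 - p)).
Proof.
  rewrite Rabs_coupling, angle_00, cos_0, Rabs_R1, sqrt_mult_alt by lra.
  field. apply PI_neq0.
Qed.

Lemma fock_Q_and_sign_corr :
  (forall th ph, exists I, improper_int2 (Qintegrand 2 c th ph) I) /\
  is_lub (Qset 2 c) (4 / PI * sqrt (p * (1 - p))) /\
  (exists E, improper_int2 (fun u v => dens 2 c 0 0 u v * sgn (u * v)) E /\
             Rabs E = 4 / PI * sqrt (p * (1 - p))).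
Proof.
  assert (two_pi_pos : 0 < 2 / PI) by (apply Rdiv_lt_0_compat; [lra | apply PI_RGT_0]).
  split; [| split].
  - intros th ph. eexists. apply improper_int2_Qintegrand.
  - rewrite <- Rabs_coupling_00.
    apply (is_lub_Qset 2 c (fun th ph => Rabs (coupling th ph) * (2 / PI)));
      [exact improper_int2_Qintegrand |].
    intros th ph. apply Rmult_le_compat_r; [lra |].
    rewrite (Rabs_coupling 0 0), angle_00, cos_0, Rabs_R1, Rmult_1_r. apply Rabs_coupling_le.
  - exists (coupling 0 0 * (2 / PI)). split; [exact improper_int2_sign_corr |].
    rewrite <- Rabs_coupling_00, Rabs_mult, (Rabs_right (2 / PI)) by lra. reflexivity.
Qed.

End FockDecomposition.

(* Eigenbasis e_i0, e_i1, (e_j0 +- e_j1)/sqrt 2 of the partial transpose: it keeps the two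
   populations on {i0, i1} and moves the coherence onto the complementary pair {j0, j1}. *)
Definition split_basis (i0 i1 j0 j1 : nat) (a k : nat) : R :=
  match a with
  | O => if Nat.eqb k i0 then 1 else 0
  | 1%nat => if Nat.eqb k i1 then 1 else 0
  | 2%nat => if Nat.eqb k j0 then / sqrt 2 else if Nat.eqb k j1 then / sqrt 2 else 0
  | _ => if Nat.eqb k j0 then / sqrt 2 else if Nat.eqb k j1 then - / sqrt 2 else 0
  end.

Definition split_spectrum (l0 l1 w : R) (a : nat) : R :=
  match a with O => l0 | 1%nat => l1 | 2%nat => w | _ => - w end.

Lemma negative_part_split_spectrum l0 l1 w :
  0 <= l0 -> 0 <= l1 -> fsum 4 (fun a => Rmax 0 (- split_spectrum l0 l1 w a)) = Rabs w.
Proof.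
  intros h0 h1. cbn. rewrite (Rmax_left 0 (- l0)), (Rmax_left 0 (- l1)) by lra.
  unfold Rmax, Rabs. destruct (Rle_dec 0 (- w)), (Rle_dec 0 (- - w)), (Rcase_abs w); lra.
Qed.

Lemma negativity_PhiSt_PsiSt p s c :
  0 <= p <= 1 -> (s = 1 \/ s = -1) -> (c = PhiSt p s \/ c = PsiSt p s) ->
  negativity_is (ptA (rho4 c)) (sqrt (p * (1 - p))).
Proof.
  intros hp hs hc.
  assert (half : / sqrt 2 * / sqrt 2 = / 2) by (rewrite <- Rinv_mult, sqrt_sqrt; lra).
  set (w := sqrt p * (s * sqrt (1 - p))).
  assert (neg : sqrt (p * (1 - p)) = fsum 4 (fun a => Rmax 0 (- split_spectrum (sqrt p * sqrt p)
                  (s * sqrt (1 - p) * (s * sqrt (1 - p))) w a))).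
  { rewrite negative_part_split_spectrum by apply Rle_0_sqr.
    unfold w. rewrite sqrt_mult_alt, !Rabs_mult by lra.
    rewrite (Rabs_right (sqrt p)), (Rabs_right (sqrt (1 - p))) by (apply Rle_ge, sqrt_pos).
    destruct hs as [-> | ->]; [rewrite Rabs_R1 | rewrite Rabs_left by lra]; ring. }
  destruct hc as [-> | ->]; [exists (split_basis 0 3 1 2) | exists (split_basis 1 2 0 3)];
    exists (split_spectrum (sqrt p * sqrt p) (s * sqrt (1 - p) * (s * sqrt (1 - p))) w);
    (split; [| split; [| exact neg]]).
  all: intros a b ha hb; destruct a as [| [| [| [| a]]]]; destruct b as [| [| [| [| b]]]]; try lia.
  all: unfold ptA, rho4, w; cbn; lra.
Qed.

Theorem mainTheorem5 :
  forall (p s : R), 0 <= p <= 1 -> (s = 1 \/ s = -1) ->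
  forall c : nat -> nat -> R, (c = PhiSt p s \/ c = PsiSt p s) ->
    (forall th ph, exists I, improper_int2 (Qintegrand 2 c th ph) I) /\
    is_lub (Qset 2 c) (4 / PI * sqrt (p * (1 - p))) /\
    negativity_is (ptA (rho4 c)) (sqrt (p * (1 - p))) /\
    (exists E, improper_int2 (fun u v => dens 2 c 0 0 u v * sgn (u * v)) E /\
               Rabs E = 4 / PI * sqrt (p * (1 - p))).
Proof.
  intros p s hp hs c hc.
  pose proof (negativity_PhiSt_PsiSt p s c hp hs hc) as negativity.
  assert (s_sq : s * s = 1) by (destruct hs as [-> | ->]; ring).
  destruct hc as [-> | ->].
  - destruct (fock_Q_and_sign_corr p s 0 (PhiSt p s) Rplus hp hs) as (HQ & Hlub & HE);
      [lia | intros; apply dens_PhiSt; assumption | apply Rplus_0_r | tauto].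
  - destruct (fock_Q_and_sign_corr p s 1 (PsiSt p s) Rminus hp hs) as (HQ & Hlub & HE);
      [lia | intros; apply dens_PsiSt; assumption | apply Rminus_0_r | tauto].
Qed.
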